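(* Consider a deterministic solution of the Marker Problem with $K=1$ round of $T$ steps tolerating $f$ faults. For $n\in[N]$ let $X(n)$ be the set of processes that send or receive at least one message during the $T$ steps of the execution in which all processes are honest and the initially marked process $P_1$ receives input $I_1=n$. Let $n_1,n_2\in[N]\setminus\{1\}$ with $n_1\neq n_2$, and $D=X(n_1)\cap X(n_2)$. Then either (i) $P_{n_1}\in X(n_2)$ or $P_{n_2}\in X(n_1)$, or (ii) $|D|\ge f-1$.
   Context: Model. There are $N$ processes $P_1,\dots,P_N$; $[N]=\{1,\dots,N\}$. Time proceeds in discrete steps $t=0,1,2,\dots$ (synchronous network). At each step every process first receives all messages sent to it at the previous step, each together with the identity of its sender, and then may send messages to any processes; the behaviour of an honest process is given by its protocol, a deterministic function of its inputs and of all messages it has received so far. Communication is authenticated: a process $P_j$ can sign a string $m$, producing $(m)_{P_j}$; every sent message is signed by its sender; no process other than $P_j$ can produce a string containing $(m)_{P_j}$ unless it copied it from a message it received, except that corrupted processes can produce signatures of any corrupted process. An $f$-adversary knows all protocols and all inputs (including future inputs), chooses at time $0$ a set of at most $f$ processes to corrupt, and makes them behave arbitrarily subject to the signature rule; the other processes are honest and follow their protocol. $\mathcal H$ denotes the set of honest processes. A protocol tolerates $f$ faults if its required properties hold against every $f$-adversary. Marker Problem ($K$ rounds of $T$ steps). Time is divided into $K$ consecutive rounds of $T$ steps. At the end of each round every honest process decides either ''unmarked'' or ''marked, with previous marked process $d$'' where $d\in[N]\cup\{\perp\}$. The marked process $M$ of round $1$ is $P_1$ if $P_1\in\mathcal H$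 and $\perp$ otherwise; the marked process of round $i+1$ is the honest process that decided ''marked'' at the end of round $i$, or $\perp$ if there is none. At the beginning of round $i$, if $M\neq\perp$, $M$ receives an input $I_i\in[N]$ (''send the marker to $P_{I_i}$''). Required at the end of every round $i$: (consistency) at most one honest process decides it is marked; (liveness) if $M\in\mathcal H$, $I_i=n$ and $P_n\in\mathcal H$, then $P_n$ decides it is marked with previous marked process $M$; (non-impersonation) if $M=\perp$ and an honest process decides it is marked with previous marked process $d$, then $d\notin\mathcal H$. *)

From Stdlib Require List.
From mathcomp Require Import all_boot.

Set Implicit Arguments.
Unset Strict Implicit.
Unset Printing Implicit Defensive.

Section Model.
Variable N : nat.
(* Processes P_1 .. P_N are the elements of 'I_N; P_1 is a distinguished
   index (in the theorem, the one with value 0). *)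
Notation proc := 'I_N.

Inductive msg : Type :=
  | Leaf of nat
  | Pair of msg & msg
  | Sig of proc & msg.

Inductive subterm : msg -> msg -> Prop :=
  | st_refl m : subterm m m
  | st_pairl x a b : subterm x a -> subterm x (Pair a b)
  | st_pairr x a b : subterm x b -> subterm x (Pair a b)
  | st_sig x p a : subterm x a -> subterm x (Sig p a).

(* What a process receives at one step: for each sender, the list of
   messages that sender sent to it at the previous step. *)
Definition inbox := proc -> seq msg.

(* A view (local history) is the list of inboxes of steps 0, 1, ..., k-1. *)
Definition view := seq inbox.

(* A schedule: [s t p q] = messages sent at step t by p to q. *)
Definition sched := nat -> proc -> proc -> seq msg.

Inductive decision : Type :=
  | Unmarked
  | Marked of option proc.   (* Marked d : previous marked process d (None = ⊥) *)

Definition is_marked (d : decision) : bool :=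
  if d is Marked _ then true else false.

(* A deterministic protocol: what process p sends (to each recipient) given
   its input and its view so far, and its decision at the end of the round. *)
Record protocol : Type := Protocol {
  send : proc -> option proc -> view -> proc -> seq msg;
  decide : proc -> option proc -> view -> decision }.

(* The strings a process can copy: every message m received from sender s
   is signed by s, i.e. received as (m)_s, together with all its substrings. *)
Definition known (v : view) (x : msg) : Prop :=
  exists k s m, k < size v /\ List.In m (nth (fun _ => [::]) v k s) /\ subterm x (Sig s m).

Definition can_produce (C : {set proc}) (p : proc) (v : view) (m : msg) : Prop :=
  forall q m', subterm (Sig q m') m ->
    q = p \/ (p \in C /\ q \in C) \/ known v (Sig q m').

Definition respects_sig (Pi : protocol) : Prop :=
  forall p i v r m, List.In m (send Pi p i v r) -> can_produce set0 p v m.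

(* Inbox of q at step t (messages sent at step t-1; nothing at step 0). *)
Definition inbox_at (s : sched) (t : nat) (q : proc) : inbox :=
  fun sdr => if t is t'.+1 then s t' sdr q else [::].

Definition view_of (s : sched) (q : proc) (k : nat) : view :=
  [seq inbox_at s t q | t <- iota 0 k].

Definition input (P1 : proc) (I : proc) (p : proc) : option proc :=
  if p == P1 then Some I else None.

Definition is_execution (P1 : proc) (Pi : protocol) (T : nat) (C : {set proc})
    (I : proc) (s : sched) : Prop :=
  forall t, t < T -> forall p,
    (p \notin C -> forall r, s t p r = send Pi p (input P1 I p) (view_of s p t.+1) r) /\
    (p \in C -> forall r m, List.In m (s t p r) -> can_produce C p (view_of s p t.+1) m).

Definition dec (P1 : proc) (Pi : protocol) (T : nat) (I : proc) (s : sched)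
    (p : proc) : decision :=
  decide Pi p (input P1 I p) (view_of s p T).

Definition solves (P1 : proc) (Pi : protocol) (T f : nat) : Prop :=
  respects_sig Pi /\
  forall (C : {set proc}) (I : proc) (s : sched),
    #|C| <= f -> is_execution P1 Pi T C I s ->
    [/\
        (forall p q, p \notin C -> q \notin C ->
           is_marked (dec P1 Pi T I s p) -> is_marked (dec P1 Pi T I s q) -> p = q),
        (P1 \notin C -> I \notin C -> dec P1 Pi T I s I = Marked (Some P1))
      &
        (P1 \in C -> forall p d, p \notin C ->
           dec P1 Pi T I s p = Marked (Some d) -> d \in C)].

Definition X (T : nat) (s : sched) : {set proc} :=
  [set p | [exists t : 'I_T, exists q : proc,
     (0 < size (s t p q)) || ((t.+1 < T) && (0 < size (s t q p)))]].

End Model.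

From Stdlib Require List.
From Stdlib Require Import FunctionalExtensionality.
From mathcomp Require Import all_boot.
From mathcomp Require Import zify.

Set Implicit Arguments.
Unset Strict Implicit.
Unset Printing Implicit Defensive.

(* Suppose P_{n1} is silent in the
   fault-free execution s2, P_{n2} is silent in s1, and D = X(n1) ∩ X(n2)
   has fewer than f - 1 members.  Corrupt C = {P_1} ∪ D (at most f
   processes) and let the corrupted processes replay, step by step, the
   union of what they did in s1 and in s2.  Every honest process outside C
   is silent in s1 or in s2, so what it sends and receives in the merged
   schedule coincides with one of the two fault-free executions; the
   corrupted processes only relay strings they saw in s1 or s2, hence obey
   the signature rule.  The merged schedule is therefore a legal execution
   with corrupted set C, in which P_{n1} sees exactly its view from s1 and
   P_{n2} its view from s2: by liveness in s1 and s2 both decide "marked",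
   contradicting consistency. *)

Section MergedSchedule.
Variables (N T : nat).
Implicit Types (s : sched N) (p q : 'I_N).

Definition sched_cat s1 s2 : sched N := fun t p q => s1 t p q ++ s2 t p q.

Lemma silent_send {s p q t} : p \notin X T s -> t < T -> s t p q = [::].
Proof.
move=> pX ht; case E: (s t p q) => [|m l] //; case/negP: pX.
rewrite inE; apply/existsP; exists (Ordinal ht); apply/existsP; exists q.
by rewrite /= E.
Qed.

Lemma silent_recv {s p q t} : p \notin X T s -> t.+1 < T -> s t q p = [::].
Proof.
move=> pX ht; case E: (s t q p) => [|m l] //; case/negP: pX.
rewrite inE; apply/existsP; exists (Ordinal (ltnW ht)); apply/existsP; exists q.
by rewrite /= E ht orbT.
Qed.

Lemma view_of_eq s s' p k :
  (forall t sdr, t.+1 < k -> s t sdr p = s' t sdr p) ->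
  view_of s p k = view_of s' p k.
Proof.
move=> same; apply/eq_in_map => -[|t] //; rewrite mem_iota add0n => /andP[_ ht].
by apply: functional_extensionality => sdr; apply: same.
Qed.

Lemma view_cat_l s1 s2 p k :
  p \notin X T s2 -> k <= T -> view_of (sched_cat s1 s2) p k = view_of s1 p k.
Proof.
move=> pX hk; apply: view_of_eq => t sdr ht.
by rewrite /sched_cat (silent_recv pX (leq_trans ht hk)) cats0.
Qed.

Lemma view_cat_r s1 s2 p k :
  p \notin X T s1 -> k <= T -> view_of (sched_cat s1 s2) p k = view_of s2 p k.
Proof.
move=> pX hk; apply: view_of_eq => t sdr ht.
by rewrite /sched_cat (silent_recv pX (leq_trans ht hk)).
Qed.

Lemma nth_view_of s p K k :
  k < K -> nth (fun=> [::]) (view_of s p K) k = inbox_at s k p.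
Proof. by move=> hk; rewrite (nth_map 0) ?size_iota // nth_iota. Qed.

Lemma known_view_cat s1 s2 p k x :
  known (view_of s1 p k) x \/ known (view_of s2 p k) x ->
  known (view_of (sched_cat s1 s2) p k) x.
Proof.
have size_view s : size (view_of s p k) = k by rewrite size_map size_iota.
have inbox_cat t sdr : inbox_at (sched_cat s1 s2) t p sdr =
    inbox_at s1 t p sdr ++ inbox_at s2 t p sdr by case: t.
by case=> -[t [sdr [m [ht [hm hx]]]]]; exists t, sdr, m;
  move: ht hm; rewrite !size_view => ht; rewrite !nth_view_of // inbox_cat;
  split=> //; split=> //; apply/List.in_app_iff; [left | right].
Qed.

End MergedSchedule.

Lemma can_produce_mono N (C C' : {set 'I_N}) p (v v' : view N) m :
  C \subset C' -> (forall x, known v x -> known v' x) ->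
  can_produce C p v m -> can_produce C' p v' m.
Proof.
move=> sCC' sv prod q m' hsub.
case: (prod q m' hsub) => [-> | [[pC qC] | kn]]; first by left.
  by right; left; split; apply: (subsetP sCC').
by right; right; apply: sv.
Qed.

Lemma input_other N (P1 I I' p : 'I_N) : p != P1 -> input P1 I p = input P1 I' p.
Proof. by rewrite /input => /negbTE->. Qed.

Lemma target_marked N (P1 : 'I_N) (Pi : protocol N) T f I (s : sched N) :
  solves P1 Pi T f -> is_execution P1 Pi T set0 I s ->
  dec P1 Pi T I s I = Marked (Some P1).
Proof.
by case=> _ sol exe; case: (sol set0 I s _ exe) => [|_ ->]; rewrite ?cards0 ?in_set0.
Qed.

Section MergedExecution.
Variables (N T : nat) (P1 : 'I_N) (Pi : protocol N).
Hypothesis Pi_sig : respects_sig Pi.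
Variables (I1 I2 : 'I_N) (s1 s2 : sched N).
Hypothesis exe1 : is_execution P1 Pi T set0 I1 s1.
Hypothesis exe2 : is_execution P1 Pi T set0 I2 s2.
Variable C : {set 'I_N}.
Hypothesis P1C : P1 \in C.
Hypothesis common_in_C : X T s1 :&: X T s2 \subset C.

Lemma honest_signs I (s : sched N) t p r m :
  is_execution P1 Pi T set0 I s -> t < T -> List.In m (s t p r) ->
  can_produce set0 p (view_of s p t.+1) m.
Proof.
by move=> exe ht; rewrite ((exe t ht p).1 (negbT (in_set0 p))); apply: Pi_sig.
Qed.

(* An honest process of the merge behaves as in the execution where the
   other one is silent. *)
Lemma merged_honest I t p r : t < T -> p \notin C ->
  sched_cat s1 s2 t p r =
  send Pi p (input P1 I p) (view_of (sched_cat s1 s2) p t.+1) r.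
Proof.
move=> ht pC; have pP1 : p != P1 by apply: contraNneq pC => ->.
have [pX2 | pX1] : p \notin X T s2 \/ p \notin X T s1.
  case: (boolP (p \in X T s1)) => pX1; last by right.
  left; apply: contraNN pC => pX2; apply: (subsetP common_in_C).
  by rewrite inE pX1.
- rewrite (view_cat_l _ pX2 ht) (input_other _ I1 pP1).
  rewrite -((exe1 ht p).1 (negbT (in_set0 p))).
  by rewrite /sched_cat (silent_send pX2 ht) cats0.
- rewrite (view_cat_r _ pX1 ht) (input_other _ I2 pP1).
  rewrite -((exe2 ht p).1 (negbT (in_set0 p))).
  by rewrite /sched_cat (silent_send pX1 ht).
Qed.

(* A corrupted process of the merge only relays messages it legitimately
   sent in s1 or s2, so it obeys the signature rule. *)
Lemma merged_corrupt t p r m : t < T ->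
  List.In m (sched_cat s1 s2 t p r) ->
  can_produce C p (view_of (sched_cat s1 s2) p t.+1) m.
Proof.
move=> ht /List.in_app_iff [hm | hm].
- apply: can_produce_mono (sub0set C) _ (honest_signs exe1 ht hm) => x kn.
  by apply: known_view_cat; left.
- apply: can_produce_mono (sub0set C) _ (honest_signs exe2 ht hm) => x kn.
  by apply: known_view_cat; right.
Qed.

Lemma merged_execution I : is_execution P1 Pi T C I (sched_cat s1 s2).
Proof.
move=> t ht p; split=> [pC r | _ r m]; first exact: merged_honest.
exact: merged_corrupt.
Qed.

End MergedExecution.

Theorem mainTheorem6 (N T f : nat) (P1 : 'I_N) (hP1 : nat_of_ord P1 = 0)
    (Pi : protocol N) (n1 n2 : 'I_N) (s1 s2 : sched N) :
  solves P1 Pi T f ->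
  is_execution P1 Pi T set0 n1 s1 ->
  is_execution P1 Pi T set0 n2 s2 ->
  n1 != P1 -> n2 != P1 -> n1 != n2 ->
  (n1 \in X T s2 \/ n2 \in X T s1) \/ (f - 1 <= #|X T s1 :&: X T s2|)%N.
Proof.
move=> sol exe1 exe2 n1P1 n2P1 n1n2.
have [n1X2 | n1X2] := boolP (n1 \in X T s2); first by left; left.
have [n2X1 | n2X1] := boolP (n2 \in X T s1); first by left; right.
right; rewrite leqNgt; apply/negP => small_D.
pose C := P1 |: (X T s1 :&: X T s2); pose s := sched_cat s1 s2.
have C_small : #|C| <= f.
  have : #|C| <= #|X T s1 :&: X T s2|.+1 by rewrite cardsU1; case: (_ \notin _).
  by move: small_D; lia.
have exe : is_execution P1 Pi T C n1 s.
  apply: (merged_execution sol.1 exe1 exe2); first exact: setU11.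
  exact: subsetUr.
have n1C : n1 \notin C by rewrite in_setU1 in_setI (negbTE n1P1) (negbTE n1X2) andbF.
have n2C : n2 \notin C by rewrite in_setU1 in_setI (negbTE n2P1) (negbTE n2X1).
have dec1 : dec P1 Pi T n1 s n1 = Marked (Some P1).
  by rewrite /dec (view_cat_l _ n1X2 (leqnn T)); apply: target_marked sol exe1.
have dec2 : dec P1 Pi T n1 s n2 = Marked (Some P1).
  rewrite /dec (view_cat_r _ n2X1 (leqnn T)) (input_other _ n2 n2P1).
  exact: target_marked sol exe2.
case: (sol.2 C n1 s C_small exe) => consistent _ _.
by case/eqP: n1n2; apply: consistent; rewrite ?dec1 ?dec2.
Qed.
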